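(* Let $N=(S,E,F,I)$ be a pure 1-occurrence Petri net. For a place $s$ let $s^\bullet=\{t\in E\mid F(s,t)>0\}$ and ${}^\bullet s=\{t\in E\mid F(t,s)>0\}$; for a finite $Y\subseteq E$ let ${}^\bullet Y(s)=\sum_{t\in Y}F(s,t)$, and for $X\subseteq E$ let $X^\bullet(s)=\sum_{t\in X}F(t,s)$. For $n\in\mathbb{Z}$ let ${}^n s=\{X\subseteq{}^\bullet s\mid X^\bullet(s)\ge n\}$ and $\varphi^n_s=\bigvee_{X\in{}^n s}\bigwedge X$. Let $T(N)$ be the set of all formulae $\bigwedge Y\Rightarrow\varphi_s^{\,{}^\bullet Y(s)-I(s)}$ with $s\in S$ and $Y$ a finite subset of $s^\bullet$. Then a finite set $X\subseteq E$ is a model of $T(N)$ if and only if $X$ is a configuration of $N$.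
   Context: A Petri net $(S,E,F,I)$ has places $S$, transitions $E$ (disjoint), $F:(S\times E\cup E\times S)\to\mathbb{N}$, $I:S\to\mathbb{N}$. For a finite multiset $X$ of transitions, ${}^\bullet X(s)=\sum_t F(s,t)X(t)$, $X^\bullet(s)=\sum_t X(t)F(t,s)$, and $X$ is a configuration iff $I-{}^\bullet X+X^\bullet\ge 0$ pointwise. A 1-occurrence net is one in which every configuration is a set; a net is pure if no $s,t$ have both $F(s,t)>0$ and $F(t,s)>0$. A model of a set of infinitary propositional formulae over $E$ is a subset of $E$ (the true variables) satisfying all of them. *)

From mathcomp Require Import all_boot all_order all_algebra.
Set Implicit Arguments. Unset Strict Implicit. Unset Printing Implicit Defensive.
Import Order.TTheory GRing.Theory Num.Theory.

Section PetriNets.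
Variables (S : Type) (E : eqType).
Variables (pre : S -> E -> nat) (post : E -> S -> nat) (I : S -> nat).
(* pre s t = F(s,t), post t s = F(t,s); places and transitions are disjoint
   since they live in different types. *)

(* A finite multiset of transitions is represented by a list (multiplicity = count). *)
Definition preset (X : seq E) (s : S) : nat := \sum_(t <- X) pre s t.
Definition postset (X : seq E) (s : S) : nat := \sum_(t <- X) post t s.

Definition configuration (X : seq E) : Prop :=
  forall s, (0 <= (I s)%:Z - (preset X s)%:Z + (postset X s)%:Z)%R.

Definition one_occurrence : Prop := forall X : seq E, configuration X -> uniq X.

Definition pure : Prop := forall s t, ~ (0 < pre s t /\ 0 < post t s).

Inductive form : Type :=
| FVar : E -> form
| FConj : forall J : Type, (J -> form) -> form
| FDisj : forall J : Type, (J -> form) -> form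
| FImp : form -> form -> form.

Fixpoint sat (M : E -> Prop) (phi : form) : Prop :=
  match phi with
  | FVar t => M t
  | FConj J f => forall j, sat M (f j)
  | FDisj J f => exists j, sat M (f j)
  | FImp a b => sat M a -> sat M b
  end.

Definition bigconj (X : E -> Prop) : form :=
  FConj (fun t : {t : E | X t} => FVar (proj1_sig t)).

Definition post_place (s : S) : E -> Prop := fun t => 0 < pre s t.
Definition pre_place (s : S) : E -> Prop := fun t => 0 < post t s.

(* X^bullet(s) >= n for a possibly infinite X (sum in N \cup {oo}):
   holds iff some finite partial sum reaches n. *)
Definition postsum_ge (X : E -> Prop) (s : S) (n : int) : Prop :=
  exists l : seq E, uniq l /\ (forall t, t \in l -> X t) /\
    (n <= (\sum_(t <- l) post t s)%:Z)%R.

Definition upper_sets (s : S) (n : int) (X : E -> Prop) : Prop :=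
  (forall t, X t -> pre_place s t) /\ postsum_ge X s n.

Definition phi_s (s : S) (n : int) : form :=
  FDisj (fun X : {X : E -> Prop | upper_sets s n X} => bigconj (proj1_sig X)).

Definition theory (phi : form) : Prop :=
  exists (s : S) (Y : seq E), uniq Y /\ (forall t, t \in Y -> post_place s t) /\
    phi = FImp (bigconj (fun t => t \in Y))
               (phi_s s ((preset Y s)%:Z - (I s)%:Z)%R).

Definition model (T : form -> Prop) (M : E -> Prop) : Prop :=
  forall phi, T phi -> sat M phi.

End PetriNets.

From mathcomp Require Import all_boot all_order all_algebra.
From mathcomp Require Import zify.

Set Implicit Arguments.
Unset Strict Implicit.
Unset Printing Implicit Defensive.

(* For a finite set of transitions X, the disjunction [phi_s s n] holds in X
   exactly when [n <= X^bullet(s)]: its witness can always be shrunk to the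
   transitions of X feeding s, and then its partial sums are bounded by the sum
   over X.  The clause of [T(N)] for [s] and [Y] therefore says
   [^bullet Y(s) - I(s) <= X^bullet(s)] whenever [Y] is contained in [X]; taking
   for [Y] the part of [X] consuming from [s] gives the token condition at [s],
   and conversely every such [Y] consumes at most what [X] consumes. *)

Lemma leq_sum_uniq_subset {T : eqType} (f : T -> nat) {r r' : seq T} :
  uniq r -> uniq r' -> {subset r <= r'} ->
  (\sum_(t <- r) f t <= \sum_(t <- r') f t)%N.
Proof. exact: (uniq_sub_le_big leqnn (fun m n => leq_addr n m) xpredT). Qed.

Lemma sum_filter_pos {T : Type} (f : T -> nat) (r : seq T) :
  \sum_(t <- [seq t <- r | (0 < f t)%N]) f t = \sum_(t <- r) f t.
Proof.
rewrite big_filter big_mkcond; apply: eq_bigr => t _.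
by case: ifPn => // /negPf; rewrite lt0n => /negbFE/eqP.
Qed.

Section FiniteModels.

Variables (S : Type) (E : eqType).
Variables (pre : S -> E -> nat) (post : E -> S -> nat) (I : S -> nat).
Variable X : seq E.
Hypothesis X_uniq : uniq X.

Local Notation inX := (fun t : E => t \in X).

Lemma sat_bigconj (P : E -> Prop) :
  sat inX (bigconj P) <-> forall t, P t -> t \in X.
Proof.
split => [HP t Pt | HP [t Pt]]; last exact: HP.
exact: (HP (exist _ t Pt)).
Qed.

Lemma sat_phi_s (s : S) (n : int) :
  sat inX (phi_s post s n) <-> (n <= (postset post X s)%:Z)%R.
Proof.
split.
- move=> [[Z [_ [l [l_uniq [lZ le_n_l]]]]]] /= /sat_bigconj ZX.
  have le_l_X := leq_sum_uniq_subset (fun t => post t s) l_uniq X_uniq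
                   (fun t tl => ZX t (lZ t tl)).
  by move: le_n_l le_l_X; rewrite /postset; lia.
- move=> le_n_X.
  pose Z t := t \in X /\ pre_place post s t.
  have Z_upper : upper_sets post s n Z.
    split=> [t [] //|].
    exists [seq t <- X | (0 < post t s)%N]; split; first by rewrite filter_uniq.
    split; first by move=> t; rewrite mem_filter => /andP[].
    by rewrite (sum_filter_pos (fun t => post t s)).
  by exists (exist _ Z Z_upper); apply/sat_bigconj => t [].
Qed.

Lemma sat_theory_clause (s : S) (Y : seq E) :
  sat inX (FImp (bigconj (fun t => t \in Y))
                (phi_s post s ((preset pre Y s)%:Z - (I s)%:Z)%R))
  <-> ({subset Y <= X} ->
       ((preset pre Y s)%:Z - (I s)%:Z <= (postset post X s)%:Z)%R).
Proof.
split=> [H YX | H /sat_bigconj YX]; last exact/sat_phi_s/H.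
exact/sat_phi_s/H/sat_bigconj.
Qed.

End FiniteModels.

Theorem mainTheorem7 (S : Type) (E : eqType)
  (pre : S -> E -> nat) (post : E -> S -> nat) (I : S -> nat) :
  pure pre post -> one_occurrence pre post I ->
  forall X : seq E, uniq X ->
    (model (theory pre post I) (fun t => t \in X) <-> configuration pre post I X).
Proof.
(* A finite set of transitions is given here as a duplicate-free list. *)
move=> _ _ X X_uniq; split.
- move=> X_model s.
  pose Y := [seq t <- X | (0 < pre s t)%N].
  have Y_clause : theory pre post I
      (FImp (bigconj (fun t => t \in Y))
            (phi_s post s ((preset pre Y s)%:Z - (I s)%:Z)%R)).
    exists s, Y; split; first by rewrite filter_uniq.
    by split=> // t; rewrite mem_filter => /andP[].
  have /(sat_theory_clause pre post I X_uniq) := X_model _ Y_clause.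
  have YX : {subset Y <= X} by move=> t; rewrite mem_filter => /andP[].
  move=> /(_ YX); rewrite /preset (sum_filter_pos (pre s)); lia.
- move=> X_conf _ [s [Y [Y_uniq [_ ->]]]].
  apply/(sat_theory_clause pre post I X_uniq) => YX.
  have := leq_sum_uniq_subset (pre s) Y_uniq X_uniq YX.
  have := X_conf s; rewrite /preset; lia.
Qed.
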